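(* Let $\{\mathbf{x}^k,\mathbf{y}^k,\mathbf{z}^k,\boldsymbol{\lambda}^k,\theta^{(k)},\beta^{(k)}\}$ be generated by the Fast PALM algorithm. Then for every $k\ge0$ and every $\mathbf{x}$, $$\frac{1-\theta^{(k+1)}}{(\theta^{(k+1)})^2}\bigl(f(\mathbf{x}^{k+1})-f(\mathbf{x})\bigr)-\frac{1}{\theta^{(k)}}\bigl\langle\mathcal{A}^T(\boldsymbol{\lambda}^{k+1}),\mathbf{x}-\mathbf{z}^{k+1}\bigr\rangle\le\frac{1-\theta^{(k)}}{(\theta^{(k)})^2}\bigl(f(\mathbf{x}^k)-f(\mathbf{x})\bigr)+\frac{L}{2}\bigl(\|\mathbf{z}^k-\mathbf{x}\|^2-\|\mathbf{z}^{k+1}-\mathbf{x}\|^2\bigr).$$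
   Context: Setting: finite-dimensional real inner product spaces with induced norms $\|\cdot\|$. Problem: $\min_{\mathbf{x}} f(\mathbf{x})=g(\mathbf{x})+h(\mathbf{x})$ subject to $\mathcal{A}(\mathbf{x})=\mathbf{b}$, where $g,h$ are proper convex lower semicontinuous, $g$ is differentiable with $\|\nabla g(\mathbf{x})-\nabla g(\mathbf{y})\|\le L\|\mathbf{x}-\mathbf{y}\|$ for all $\mathbf{x},\mathbf{y}$ ($L>0$), $\mathcal{A}$ is linear with adjoint $\mathcal{A}^T$. Fast PALM: given $\mathbf{x}^0,\mathbf{z}^0,\boldsymbol{\lambda}^0$ and $\theta^{(0)}=\beta^{(0)}=1$, for $k=0,1,2,\dots$: $\mathbf{y}^{k+1}=(1-\theta^{(k)})\mathbf{x}^k+\theta^{(k)}\mathbf{z}^k$; $\mathbf{z}^{k+1}=\arg\min_{\mathbf{x}}\ \langle\nabla g(\mathbf{y}^{k+1}),\mathbf{x}\rangle+h(\mathbf{x})+\langle\boldsymbol{\lambda}^k,\mathcal{A}(\mathbf{x})\rangle+\frac{\beta^{(k)}}{2}\|\mathcal{A}(\mathbf{x})-\mathbf{b}\|^2+\frac{L\theta^{(k)}}{2}\|\mathbf{x}-\mathbf{z}^k\|^2$; $\mathbf{x}^{k+1}=(1-\theta^{(k)})\mathbf{x}^k+\theta^{(k)}\mathbf{z}^{k+1}$; $\boldsymbol{\lambda}^{k+1}=\boldsymbol{\lambda}^k+\beta^{(k)}(\mathcal{A}(\mathbf{z}^{k+1})-\mathbf{b})$; $\theta^{(k+1)}=\frac{-(\theta^{(k)})^2+\sqrt{(\theta^{(k)})^4+4(\theta^{(k)})^2}}{2}$;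 $\beta^{(k+1)}=1/\theta^{(k+1)}$. *)

From mathcomp Require Import all_boot.
From Stdlib Require Import Reals.
Open Scope R_scope.

Definition vec (n : nat) := 'I_n -> R.

Definition vadd {n} (u v : vec n) : vec n := fun i => u i + v i.
Definition vsub {n} (u v : vec n) : vec n := fun i => u i - v i.
Definition vscal {n} (a : R) (u : vec n) : vec n := fun i => a * u i.

Definition dot {n} (u v : vec n) : R := \big[Rplus/0]_(i < n) (u i * v i).
Definition norm {n} (u : vec n) : R := sqrt (dot u u).

Definition is_linear {n m} (A : vec n -> vec m) : Prop :=
  forall (a c : R) (u v : vec n),
    A (vadd (vscal a u) (vscal c v)) = vadd (vscal a (A u)) (vscal c (A v)).

Definition is_adjoint {n m} (A : vec n -> vec m) (At : vec m -> vec n) : Prop :=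
  forall (u : vec n) (w : vec m), dot (A u) w = dot u (At w).

Definition convex_fun {n} (g : vec n -> R) : Prop :=
  forall (u v : vec n) (t : R), 0 <= t <= 1 ->
    g (vadd (vscal t u) (vscal (1 - t) v)) <= t * g u + (1 - t) * g v.

Definition has_gradient {n} (g : vec n -> R) (grad : vec n -> vec n) : Prop :=
  forall (u : vec n) (eps : R), 0 < eps ->
    exists delta, 0 < delta /\
      forall d : vec n, norm d < delta ->
        Rabs (g (vadd u d) - g u - dot (grad u) d) <= eps * norm d.

Definition lipschitz_grad {n} (grad : vec n -> vec n) (L : R) : Prop :=
  forall u v : vec n, norm (vsub (grad u) (grad v)) <= L * norm (vsub u v).

(* An extended-real-valued function h : R^n -> R U {+oo} is encoded by its
   effective domain [dom] and a real-valued [h] which is only meaningful on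
   [dom]; outside [dom] the function value is +oo. *)
Definition ext_proper {n} (dom : vec n -> Prop) : Prop := exists u, dom u.

Definition ext_convex {n} (dom : vec n -> Prop) (h : vec n -> R) : Prop :=
  forall (u v : vec n) (t : R), dom u -> dom v -> 0 <= t <= 1 ->
    dom (vadd (vscal t u) (vscal (1 - t) v)) /\
    h (vadd (vscal t u) (vscal (1 - t) v)) <= t * h u + (1 - t) * h v.

(* Lower semicontinuity of the extended function: for every level c strictly
   below the (possibly infinite) value at u, the function stays above c near u. *)
Definition ext_lsc {n} (dom : vec n -> Prop) (h : vec n -> R) : Prop :=
  forall (u : vec n) (c : R), (dom u -> c < h u) ->
    exists delta, 0 < delta /\
      forall v : vec n, norm (vsub v u) < delta -> dom v -> c < h v.

Definition palm_sub {n m} (gradg : vec n -> vec n) (h : vec n -> R)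
    (A : vec n -> vec m) (b : vec m) (L : R)
    (yk1 zk : vec n) (lamk : vec m) (thetak betak : R) (u : vec n) : R :=
  dot (gradg yk1) u + h u + dot lamk (A u)
  + betak / 2 * (norm (vsub (A u) b)) ^ 2
  + L * thetak / 2 * (norm (vsub u zk)) ^ 2.

From mathcomp Require Import all_boot.
From Stdlib Require Import Reals Lra Psatz FunctionalExtensionality.
Open Scope R_scope.

(* With y = y^{k+1}, the descent lemma for the L-smooth g at y, the gradient
   inequality of the convex g at y (tested against x^k and against x), the
   optimality of z^{k+1} for its subproblem and convexity of h along
   x^{k+1} = (1 - theta_k) x^k + theta_k z^{k+1} add up to
     f(x^{k+1}) - f(x) <= (1 - theta_k) (f(x^k) - f(x))
        + theta_k <A^T lambda^{k+1}, x - z^{k+1}>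
        + L theta_k^2 / 2 (|z^k - x|^2 - |z^{k+1} - x|^2),
   once the proximal term is rewritten with the three-point identity; the
   multiplier appears because lambda^{k+1} is exactly the multiplier update.
   Dividing by theta_k^2 and using theta_{k+1}^2 = theta_k^2 (1 - theta_{k+1})
   gives the claim.  Optimality of z^{k+1} is exploited without
   subdifferentials: along the segment from z^{k+1} to x the subproblem
   objective exceeds its minimum by a quadratic in the step length, so the
   slope of that quadratic at 0 is nonnegative. *)

Lemma vec_ext {n} (u v : vec n) : (forall i, u i = v i) -> u = v.
Proof. exact: functional_extensionality. Qed.

Lemma big_Rplus_lin (n : nat) (F G : 'I_n -> R) (a c : R) :
  \big[Rplus/0]_(i < n) (a * F i + c * G i) =
  a * \big[Rplus/0]_(i < n) F i + c * \big[Rplus/0]_(i < n) G i.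
Proof.
apply: (big_rec3 (fun s sF sG => s = a * sF + c * sG)); first by ring.
by move=> i s sF sG _ ->; ring.
Qed.

Lemma big_Rplus_ge0 (n : nat) (F : 'I_n -> R) :
  (forall i, 0 <= F i) -> 0 <= \big[Rplus/0]_(i < n) F i.
Proof. by move=> HF; apply: (big_ind (fun s => 0 <= s)) => // *; lra. Qed.

Section DotProduct.
Context {n : nat}.
Implicit Types u v w : vec n.

Lemma dotC u v : dot u v = dot v u.
Proof. by rewrite /dot; apply: eq_bigr => i _; ring. Qed.

Lemma dot_linl a c u v w :
  dot (fun i => a * u i + c * v i) w = a * dot u w + c * dot v w.
Proof. by rewrite /dot -big_Rplus_lin; apply: eq_bigr => i _; ring. Qed.

Lemma dotDl u v w : dot (vadd u v) w = dot u w + dot v w.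
Proof.
have -> : vadd u v = (fun i => 1 * u i + 1 * v i).
  by apply: vec_ext => i; rewrite /vadd; ring.
by rewrite dot_linl; ring.
Qed.

Lemma dotBl u v w : dot (vsub u v) w = dot u w - dot v w.
Proof.
have -> : vsub u v = (fun i => 1 * u i + (-1) * v i).
  by apply: vec_ext => i; rewrite /vsub; ring.
by rewrite dot_linl; ring.
Qed.

Lemma dotZl a u w : dot (vscal a u) w = a * dot u w.
Proof.
have -> : vscal a u = (fun i => a * u i + 0 * u i).
  by apply: vec_ext => i; rewrite /vscal; ring.
by rewrite dot_linl; ring.
Qed.

Lemma dotDr u v w : dot w (vadd u v) = dot w u + dot w v.
Proof. by rewrite dotC dotDl !(dotC w). Qed.

Lemma dotBr u v w : dot w (vsub u v) = dot w u - dot w v.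
Proof. by rewrite dotC dotBl !(dotC w). Qed.

Lemma dotZr a u w : dot w (vscal a u) = a * dot w u.
Proof. by rewrite dotC dotZl (dotC w). Qed.

Lemma dot_ge0 u : 0 <= dot u u.
Proof. by apply: big_Rplus_ge0 => i; nra. Qed.

Lemma norm_sqr u : norm u ^ 2 = dot u u.
Proof. by rewrite /norm /= Rmult_1_r sqrt_sqrt //; apply: dot_ge0. Qed.

Lemma norm_ge0 u : 0 <= norm u.
Proof. exact: sqrt_pos. Qed.

Lemma normZ a u : norm (vscal a u) = Rabs a * norm u.
Proof.
rewrite /norm dotZl dotZr -Rmult_assoc sqrt_mult_alt; last by nra.
by rewrite sqrt_Rsqr_abs.
Qed.

Lemma three_point_identity u v w :
  2 * dot (vsub u v) (vsub u w) =
  norm (vsub u v) ^ 2 + norm (vsub u w) ^ 2 - norm (vsub v w) ^ 2.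
Proof. by rewrite !norm_sqr !dotBl !dotBr (dotC v u) (dotC w u) (dotC w v); ring. Qed.

Lemma norm_sqr_add_scal u v t :
  norm (vadd u (vscal t v)) ^ 2 = dot u u + 2 * t * dot u v + t ^ 2 * dot v v.
Proof. by rewrite norm_sqr !dotDl !dotDr !dotZl !dotZr (dotC v u) /=; ring. Qed.

End DotProduct.

Lemma linear_vsub {n m} (A : vec n -> vec m) :
  is_linear A -> forall u v, A (vsub u v) = vsub (A u) (A v).
Proof.
move=> HA u v.
have -> : vsub u v = vadd (vscal 1 u) (vscal (-1) v).
  by apply: vec_ext => i; rewrite /vsub /vadd /vscal; ring.
by rewrite HA; apply: vec_ext => i; rewrite /vsub /vadd /vscal; ring.
Qed.

Lemma quadratic_ge0_discr (a b c : R) :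
  0 <= c -> (forall s, 0 <= a - 2 * s * b + s ^ 2 * c) -> b * b <= a * c.
Proof.
move=> Hc Hq; have [Hc0 | Hcpos] := Req_dec c 0.
- have [Hb0 | Hb] := Req_dec b 0; first by have := Hq 0; nra.
  have := Hq ((a + 1) / (2 * b)); rewrite Hc0.
  have -> : a - 2 * ((a + 1) / (2 * b)) * b + ((a + 1) / (2 * b)) ^ 2 * 0 = -1
    by field.
  lra.
- have Hcp : 0 < c by lra.
  have := Hq (b / c).
  have -> : a - 2 * (b / c) * b + (b / c) ^ 2 * c = (a * c - b * b) / c
    by field; lra.
  move=> Hquot; have : 0 <= (a * c - b * b) / c * c by nra.
  by rewrite /Rdiv Rmult_assoc Rinv_l; lra.
Qed.

Lemma cauchy_schwarz {n} (u v : vec n) : dot u v <= norm u * norm v.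
Proof.
have Hsq : dot u v * dot u v <= dot u u * dot v v.
  apply: quadratic_ge0_discr; first exact: dot_ge0.
  move=> s; have := dot_ge0 (vsub u (vscal s v)).
  by rewrite !dotBl !dotBr !dotZl !dotZr (dotC v u) /=; lra.
rewrite /norm -sqrt_mult_alt; last exact: dot_ge0.
apply: (Rle_trans _ (Rabs (dot u v))); first exact: Rle_abs.
by rewrite -sqrt_Rsqr_abs; apply: sqrt_le_1_alt.
Qed.

Lemma has_gradient_derivable_line {n} {g : vec n -> R} {gradg} :
  has_gradient g gradg -> forall (w d : vec n) t0,
  derivable_pt_lim (fun t => g (vadd w (vscal t d))) t0
    (dot (gradg (vadd w (vscal t0 d))) d).
Proof.
move=> Hg w d t0 eps Heps.
set w0 := vadd w (vscal t0 d); set D := dot (gradg w0) d.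
have Hd := norm_ge0 d.
have Heps' : 0 < eps / 2 / (norm d + 1) by apply: Rdiv_lt_0_compat; lra.
have [del [Hdel Hfrechet]] := Hg w0 _ Heps'.
have Hdel' : 0 < del / (norm d + 1) by apply: Rdiv_lt_0_compat; lra.
exists (mkposreal _ Hdel') => t Ht0 /= Ht.
have Hat : 0 < Rabs t by apply: Rabs_pos_lt.
have -> : vadd w (vscal (t0 + t) d) = vadd w0 (vscal t d).
  by apply: vec_ext => i; rewrite /w0 /vadd /vscal; ring.
have Hsmall : norm (vscal t d) < del.
  rewrite normZ; apply: (Rle_lt_trans _ (Rabs t * (norm d + 1))); first nra.
  have := Rmult_lt_compat_r (norm d + 1) _ _ ltac:(lra) Ht.
  by rewrite /Rdiv Rmult_assoc Rinv_l; lra.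
have := Hfrechet _ Hsmall; rewrite dotZr normZ -/D.
set Q := g (vadd w0 (vscal t d)) - g w0 => Hbound.
have Hfrac : eps / 2 / (norm d + 1) * norm d <= eps / 2.
  have -> : eps / 2 / (norm d + 1) * norm d = eps / 2 - eps / 2 / (norm d + 1)
    by field; lra.
  lra.
have -> : Q / t - D = (Q - t * D) / t by field.
rewrite /Rdiv Rabs_mult Rabs_inv; apply: (Rmult_lt_reg_r (Rabs t)) => //.
rewrite /Rdiv Rmult_assoc Rinv_l; nra.
Qed.

Lemma derivable_pt_lim_quadratic (a c t : R) :
  derivable_pt_lim (fun s => a * s + c * s ^ 2) t (a + c * (2 * t)).
Proof.
have Hlin := derivable_pt_lim_scal id a t 1 (derivable_pt_lim_id t).
have Hsq := derivable_pt_lim_scal (fun s => s ^ 2) c t _ (derivable_pt_lim_pow t 2).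
have -> : a + c * (2 * t) = a * 1 + c * (INR 2 * t ^ 1) by rewrite /=; ring.
exact: (derivable_pt_lim_plus _ _ t _ _ Hlin Hsq).
Qed.

Lemma derive_le_of_increment_le (f : R -> R) (D M : R) :
  derivable_pt_lim f 0 D ->
  (forall t, 0 < t <= 1 -> f t - f 0 <= t * M) -> D <= M.
Proof.
move=> Hf Hinc; apply: Rnot_lt_le => HMD.
have [del Hdel] := Hf (D - M) ltac:(lra).
have Hdelp := cond_pos del.
set t := Rmin (del / 2) 1.
have Ht : 0 < t <= 1 by split; [apply: Rmin_glb_lt | apply: Rmin_r]; lra.
have Htdel : Rabs t < del.
  by have : t <= del / 2 := Rmin_l _ _; rewrite Rabs_right; lra.
have := Hdel t ltac:(lra) Htdel; rewrite Rplus_0_l => Hclose.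
have Hslope : (f t - f 0) / t <= M.
  apply: (Rmult_le_reg_r t); first lra.
  by rewrite /Rdiv Rmult_assoc Rinv_l; have := Hinc t Ht; lra.
have := Rabs_minus_sym ((f t - f 0) / t) D.
have := Rle_abs (D - (f t - f 0) / t).
lra.
Qed.

Lemma slope_ge0_of_quadratic_ge0 (a c : R) :
  (forall t, 0 < t <= 1 -> 0 <= a * t + c * t ^ 2) -> 0 <= a.
Proof.
move=> Hq.
have Hder := derivable_pt_lim_opp _ _ _ (derivable_pt_lim_quadratic a c 0).
suff : - (a + c * (2 * 0)) <= 0 by lra.
apply: (derive_le_of_increment_le _ _ _ Hder) => t Ht.
by rewrite /opp_fct; have := Hq t Ht; rewrite /=; lra.
Qed.

Lemma convex_gradient_ineq {n} {g : vec n -> R} {gradg} (w u : vec n) :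
  has_gradient g gradg -> convex_fun g ->
  g w + dot (gradg w) (vsub u w) <= g u.
Proof.
move=> Hg Hconv; set d := vsub u w.
have Hw0 : vadd w (vscal 0 d) = w by apply: vec_ext => i; rewrite /vadd /vscal; ring.
have Hline t : vadd w (vscal t d) = vadd (vscal t u) (vscal (1 - t) w).
  by apply: vec_ext => i; rewrite /vadd /vscal /d /vsub; ring.
have := has_gradient_derivable_line Hg w d 0; rewrite Hw0 => Hder.
suff : dot (gradg w) d <= g u - g w by lra.
apply: (derive_le_of_increment_le _ _ _ Hder) => t Ht.
by rewrite /= Hline Hw0; have := Hconv u w t ltac:(lra); lra.
Qed.

Lemma descent_lemma {n} {g : vec n -> R} {gradg L} (w d : vec n) :
  has_gradient g gradg -> lipschitz_grad gradg L ->
  g (vadd w d) <= g w + dot (gradg w) d + L / 2 * norm d ^ 2.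
Proof.
move=> Hg Hlip.
set D := dot (gradg w) d; set N := norm d ^ 2.
set phi := fun t => g (vadd w (vscal t d)) - (D * t + L / 2 * N * t ^ 2).
set phi' := fun t => dot (gradg (vadd w (vscal t d))) d - (D + L / 2 * N * (2 * t)).
have Hder c : derivable_pt_lim phi c (phi' c).
  exact: (derivable_pt_lim_minus _ (fun t => D * t + L / 2 * N * t ^ 2) _ _ _
           (has_gradient_derivable_line Hg w d c) (derivable_pt_lim_quadratic _ _ c)).
have [c [Hmvt Hc]] := MVT_cor2 _ _ 0 1 Rlt_0_1 (fun c _ => Hder c).
have Hslope : phi' c <= 0.
  have Hstep : vsub (vadd w (vscal c d)) w = vscal c d.
    by apply: vec_ext => i; rewrite /vadd /vsub /vscal; ring.
  have Hgap := Hlip (vadd w (vscal c d)) w.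
  rewrite Hstep normZ Rabs_right in Hgap; last lra.
  have := cauchy_schwarz (vsub (gradg (vadd w (vscal c d))) (gradg w)) d.
  rewrite dotBl -/D /phi' /N /= Rmult_1_r.
  have := norm_ge0 d; have := norm_ge0 (vsub (gradg (vadd w (vscal c d))) (gradg w)).
  nra.
have E1 : vadd w (vscal 1 d) = vadd w d.
  by apply: vec_ext => i; rewrite /vadd /vscal; ring.
have E0 : vadd w (vscal 0 d) = w by apply: vec_ext => i; rewrite /vadd /vscal; ring.
move: Hmvt; rewrite /phi E1 E0 /=; nra.
Qed.

Lemma palm_sub_optimality {n m} {gradg h hdom} {A : vec n -> vec m} {At b L}
    {y zk z' u : vec n} {lam : vec m} {th be : R} :
  ext_convex hdom h -> is_linear A -> is_adjoint A At -> hdom z' -> hdom u ->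
  (forall v, hdom v -> palm_sub gradg h A b L y zk lam th be z'
                       <= palm_sub gradg h A b L y zk lam th be v) ->
  h z' + dot (gradg y) (vsub z' u)
  + dot (At (vadd lam (vscal be (vsub (A z') b)))) (vsub z' u)
  + L * th * dot (vsub z' zk) (vsub z' u) <= h u.
Proof.
move=> Hhconv HA HAt Hz' Hu Hmin.
set c := gradg y; set r := vsub (A z') b; set q := vsub z' zk.
set p := vsub u z'; set s := vsub (A u) (A z').
set slope := dot c p + (h u - h z') + dot lam s + be * dot r s + L * th * dot q p.
have Hslope : 0 <= slope.
  apply: (slope_ge0_of_quadratic_ge0 _ (be / 2 * dot s s + L * th / 2 * dot p p)).
  move=> t Ht; set w := vadd (vscal t u) (vscal (1 - t) z').
  have [Hw Hhw] := Hhconv u z' t Hu Hz' ltac:(lra).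
  have Ew : w = vadd z' (vscal t p).
    by apply: vec_ext => i; rewrite /w /p /vadd /vscal /vsub; ring.
  have EAw : vsub (A w) b = vadd r (vscal t s).
    by rewrite /w HA; apply: vec_ext => i; rewrite /r /s /vsub /vadd /vscal; ring.
  have Ewz : vsub w zk = vadd q (vscal t p).
    by rewrite Ew; apply: vec_ext => i; rewrite /q /vsub /vadd /vscal; ring.
  have Elam : dot lam (A w) = dot lam (A z') + t * dot lam s.
    by rewrite /w HA dotDr !dotZr /s dotBr; ring.
  have := Hmin w Hw; rewrite /palm_sub EAw Ewz !norm_sqr_add_scal Elam -/c.
  rewrite -/r -/q !norm_sqr {1}Ew dotDr dotZr.
  by rewrite -/w /= in Hhw *; rewrite /slope; nra.
have Eadj : dot (At (vadd lam (vscal be r))) (vsub z' u)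
            = - (dot lam s + be * dot r s).
  rewrite dotC -HAt linear_vsub // dotC dotDl dotZl.
  by rewrite /s !dotBr; ring.
rewrite Eadj; move: Hslope; rewrite /slope /p !dotBr; lra.
Qed.

Lemma palm_step_bound {n m} (g h : vec n -> R) hdom gradg L
    (A : vec n -> vec m) At b (xk zk z' u : vec n) (lam : vec m) (th be : R) :
  convex_fun g -> has_gradient g gradg -> lipschitz_grad gradg L ->
  ext_convex hdom h -> is_linear A -> is_adjoint A At ->
  0 < th <= 1 -> hdom z' -> hdom u ->
  (forall v, hdom v ->
     palm_sub gradg h A b L (vadd (vscal (1 - th) xk) (vscal th zk)) zk lam th be z'
     <= palm_sub gradg h A b L (vadd (vscal (1 - th) xk) (vscal th zk)) zk lam th be v) ->
  h (vadd (vscal (1 - th) xk) (vscal th z')) <= (1 - th) * h xk + th * h z' ->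
  let x' := vadd (vscal (1 - th) xk) (vscal th z') in
  g x' + h x' - (g u + h u)
  <= (1 - th) * (g xk + h xk - (g u + h u))
     + th * dot (At (vadd lam (vscal be (vsub (A z') b)))) (vsub u z')
     + L / 2 * th ^ 2 * (norm (vsub zk u) ^ 2 - norm (vsub z' u) ^ 2).
Proof.
move=> Hgconv Hgrad Hlip Hhconv HA HAt Hth Hz' Hu Hmin Hhx x'.
set y := vadd (vscal (1 - th) xk) (vscal th zk) in Hmin.
set c := gradg y; set q := vsub z' zk.
have Hopt := palm_sub_optimality Hhconv HA HAt Hz' Hu Hmin.
have Hdescent := descent_lemma y (vsub x' y) Hgrad Hlip.
have Ex' : vadd y (vsub x' y) = x'.
  by apply: vec_ext => i; rewrite /vadd /vsub; ring.
have Exy : vsub x' y = vscal th q.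
  by apply: vec_ext => i; rewrite /x' /y /q /vadd /vsub /vscal; ring.
rewrite Ex' Exy normZ Rabs_right -/c in Hdescent; last lra.
have Ecy : dot c y = (1 - th) * dot c xk + th * dot c zk.
  by rewrite /y dotDr !dotZr.
have Hgx := convex_gradient_ineq y xk Hgrad Hgconv.
have Hgu := convex_gradient_ineq y u Hgrad Hgconv.
have Hpoint := three_point_identity z' zk u.
set lam' := vadd lam (vscal be (vsub (A z') b)) in Hopt *.
rewrite -/c -/q !dotBr Ecy in Hopt Hgx Hgu Hpoint *.
rewrite dotZr dotBr in Hdescent; rewrite -/x' in Hhx.
have Hgx' := Rmult_le_compat_l (1 - th) _ _ ltac:(lra) Hgx.
have Hgu' := Rmult_le_compat_l th _ _ ltac:(lra) Hgu.
have Hopt' := Rmult_le_compat_l th _ _ ltac:(lra) Hopt.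
have Hpoint' := f_equal (Rmult (L / 2 * th ^ 2)) Hpoint.
rewrite /= in Hdescent Hpoint' *; lra.
Qed.

Definition theta_next (t : R) : R := (- t ^ 2 + sqrt (t ^ 4 + 4 * t ^ 2)) / 2.

(* [theta_next t] is the positive root of [s ^ 2 + t ^ 2 s - t ^ 2 = 0]. *)
Lemma theta_next_sqr (t : R) : theta_next t ^ 2 = t ^ 2 * (1 - theta_next t).
Proof.
rewrite /theta_next; set d := sqrt _.
have Hdisc : d * d = t ^ 4 + 4 * t ^ 2 by apply: sqrt_sqrt; rewrite /=; nra.
by rewrite /= in Hdisc *; lra.
Qed.

Lemma theta_next_in_unit (t : R) : 0 < t <= 1 -> 0 < theta_next t <= 1.
Proof.
move=> Ht; have Hsq := theta_next_sqr t.
have Hpos : 0 < theta_next t.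
  rewrite /theta_next; set d := sqrt _.
  have Hd : 0 <= d := sqrt_pos _.
  have Hdisc : d * d = t ^ 4 + 4 * t ^ 2 by apply: sqrt_sqrt; rewrite /=; nra.
  by rewrite /= in Hdisc *; nra.
by split => //; rewrite /= in Hsq; nra.
Qed.

Lemma theta_in_unit (theta : nat -> R) :
  theta 0%nat = 1 -> (forall k, theta (S k) = theta_next (theta k)) ->
  forall k, 0 < theta k <= 1.
Proof.
move=> H0 Hnext; elim=> [|k IHk]; first by rewrite H0; lra.
by rewrite Hnext; apply: theta_next_in_unit.
Qed.

(* [x 0] need not lie in the domain of [h]; this is harmless because
   [theta 0 = 1] makes [x 1 = z 1]. *)
Lemma iterate_h_convex {n} (h : vec n -> R) hdom (x z : nat -> vec n)
    (theta : nat -> R) :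
  ext_convex hdom h -> theta 0%nat = 1 -> (forall k, 0 < theta k <= 1) ->
  (forall k, hdom (z (S k))) ->
  (forall k, x (S k) = vadd (vscal (1 - theta k) (x k)) (vscal (theta k) (z (S k)))) ->
  forall k, hdom (x (S k)) /\
    h (x (S k)) <= (1 - theta k) * h (x k) + theta k * h (z (S k)).
Proof.
move=> Hhconv H0 Hth Hzdom Hx; elim=> [|k [IHdom _]].
- have -> : x 1%nat = z 1%nat.
    by rewrite Hx H0; apply: vec_ext => i; rewrite /vadd /vscal; ring.
  by rewrite H0; split; [exact: Hzdom | lra].
- have Ht := Hth (S k).
  have [Hdom Hconv] := Hhconv _ _ (1 - theta (S k)) IHdom (Hzdom (S k)) ltac:(lra).
  rewrite (_ : 1 - (1 - theta (S k)) = theta (S k)) in Hdom Hconv; last by ring.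
  by rewrite Hx.
Qed.

Lemma le_div_sqr (t F' F D E : R) : 0 < t ->
  F' <= (1 - t) * F + t * D + t ^ 2 * E ->
  1 / t ^ 2 * F' - 1 / t * D <= (1 - t) / t ^ 2 * F + E.
Proof.
move=> Ht Hle; have Hinv : 0 < / t ^ 2 by apply/Rinv_0_lt_compat/pow_lt.
suff : (1 / t ^ 2 * F' - 1 / t * D) - ((1 - t) / t ^ 2 * F + E)
       = (F' - ((1 - t) * F + t * D + t ^ 2 * E)) * / t ^ 2 by nra.
by field; lra.
Qed.

Theorem proposition1
  (n m : nat) (g h : vec n -> R) (hdom : vec n -> Prop) (gradg : vec n -> vec n)
  (L : R) (A : vec n -> vec m) (At : vec m -> vec n) (b : vec m)
  (x y z : nat -> vec n) (lam : nat -> vec m) (theta beta : nat -> R)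
  (HL : 0 < L)
  (Hgconv : convex_fun g)
  (Hgrad : has_gradient g gradg)
  (Hlip : lipschitz_grad gradg L)
  (Hhprop : ext_proper hdom)
  (Hhconv : ext_convex hdom h)
  (Hhlsc : ext_lsc hdom h)
  (HAlin : is_linear A)
  (HAt : is_adjoint A At)
  (Htheta0 : theta 0%nat = 1)
  (Hbeta0 : beta 0%nat = 1)
  (Hy : forall k, y (S k) = vadd (vscal (1 - theta k) (x k)) (vscal (theta k) (z k)))
  (Hzdom : forall k, hdom (z (S k)))
  (Hzmin : forall k (u : vec n), hdom u ->
     palm_sub gradg h A b L (y (S k)) (z k) (lam k) (theta k) (beta k) (z (S k))
     <= palm_sub gradg h A b L (y (S k)) (z k) (lam k) (theta k) (beta k) u)
  (Hx : forall k, x (S k) = vadd (vscal (1 - theta k) (x k)) (vscal (theta k) (z (S k))))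
  (Hlam : forall k, lam (S k) = vadd (lam k) (vscal (beta k) (vsub (A (z (S k))) b)))
  (Htheta : forall k, theta (S k) =
     (- (theta k) ^ 2 + sqrt ((theta k) ^ 4 + 4 * (theta k) ^ 2)) / 2)
  (Hbeta : forall k, beta (S k) = 1 / theta (S k)) :
  forall (k : nat) (u : vec n), hdom u ->
    (1 - theta (S k)) / (theta (S k)) ^ 2
      * ((g (x (S k)) + h (x (S k))) - (g u + h u))
    - 1 / theta k * dot (At (lam (S k))) (vsub u (z (S k)))
    <= (1 - theta k) / (theta k) ^ 2 * ((g (x k) + h (x k)) - (g u + h u))
       + L / 2 * ((norm (vsub (z k) u)) ^ 2 - (norm (vsub (z (S k)) u)) ^ 2).
Proof.
move=> k u Hu.
have Hth := theta_in_unit theta Htheta0 Htheta.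
have [_ Hhx] := iterate_h_convex h hdom x z theta Hhconv Htheta0 Hth Hzdom Hx k.
have := palm_step_bound g h hdom gradg L A At b (x k) (z k) (z (S k)) u (lam k)
  (theta k) (beta k) Hgconv Hgrad Hlip Hhconv HAlin HAt (Hth k) (Hzdom k) Hu.
rewrite -Hy -Hx -Hlam => /(_ (Hzmin k) Hhx) Hstep.
have Hthk := Hth k; have Hth' := Hth (S k).
have Hcoef : (1 - theta (S k)) / theta (S k) ^ 2 = 1 / theta k ^ 2.
  have Hsq : theta (S k) ^ 2 = theta k ^ 2 * (1 - theta (S k)).
    by rewrite Htheta; exact: theta_next_sqr.
  by rewrite Hsq; field; split; [lra | rewrite /= in Hsq; nra].
rewrite Hcoef; apply: le_div_sqr; first lra.
by move: Hstep; rewrite /=; lra.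
Qed.
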